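(* Let $(\mathbf{S},\leq,\land,\mid,\mathsf{U})$ be a specification theory as described in the context, and assume moreover that parallel composition is idempotent in the sense that $A\leq A\mid A$ for all $A\in\mathbf{S}$. Then for all $A,B,C\in\mathbf{S}$ we have $(A\mid B)\mid C\leq A\mid(B\mid C)$, and consequently also $A\mid(B\mid C)\leq(A\mid B)\mid C$.
   Context: A specification theory consists of a set $\mathbf{S}$ (the specifications) with: a binary relation $\leq\ \subseteq \mathbf{S}\times\mathbf{S}$ (refinement) which is a preorder (reflexive and transitive); a universal specification $\mathsf{U}\in\mathbf{S}$ with $A\leq\mathsf{U}$ for all $A\in\mathbf{S}$; a total binary operation $\land:\mathbf{S}\times\mathbf{S}\to\mathbf{S}$ (conjunction) such that for all $A,B,C\in\mathbf{S}$: $A\land B\leq B\land A$, $A\land B\leq A$, $A\land B\leq B$, and if $C\leq A$ and $C\leq B$ then $C\leq A\land B$ (i.e. $\land$ is a greatest lower bound); a total binary operation $\mid:\mathbf{S}\times\mathbf{S}\to\mathbf{S}$ (parallel composition) such that for all $A,B,C\in\mathbf{S}$: $A\mid B\leq B\mid A$ (commutativity), and $A\leq B$ implies $A\mid C\leq B\mid C$ (precongruence); and moreover $A\mid\mathsf{U}\leq A$ for all $A\in\mathbf{S}$. *)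

Set Implicit Arguments.

Record SpecTheory := {
  spec :> Type;
  refines : spec -> spec -> Prop;
  U : spec;
  conj : spec -> spec -> spec;
  par : spec -> spec -> spec;
  refines_refl : forall A, refines A A;
  refines_trans : forall A B C, refines A B -> refines B C -> refines A C;
  refines_U : forall A, refines A U;
  conj_comm : forall A B, refines (conj A B) (conj B A);
  conj_lb1 : forall A B, refines (conj A B) A;
  conj_lb2 : forall A B, refines (conj A B) B;
  conj_glb : forall A B C, refines C A -> refines C B -> refines C (conj A B);
  par_comm : forall A B, refines (par A B) (par B A);
  par_mono : forall A B C, refines A B -> refines (par A C) (par B C);
  par_U : forall A, refines (par A U) A
}.

(* Under idempotence, parallel composition is a greatest lower bound for
   refinement: it is below both arguments because [A | B <= A | U <= A], and
   above every common lower bound [X] because [X <= X | X <= A | B].  A binary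
   glb of a preorder is associative up to equivalence, as for any meet. *)


Section ParMeet.

Variable T : SpecTheory.

Local Notation "A <== B" := (refines T A B) (at level 70).
Local Notation "A || B" := (par T A B).

Lemma par_monor (A B B' : T) : B <== B' -> A || B <== A || B'.
Proof.
  intro HB.
  apply refines_trans with (B || A); [apply par_comm |].
  apply refines_trans with (B' || A); [apply par_mono, HB | apply par_comm].
Qed.

Lemma par_lel (A B : T) : A || B <== A.
Proof.
  apply refines_trans with (A || U T); [apply par_monor, refines_U | apply par_U].
Qed.

Lemma par_ler (A B : T) : A || B <== B.
Proof. apply refines_trans with (B || A); [apply par_comm | apply par_lel]. Qed.

Hypothesis par_idem : forall A : T, A <== A || A.

Lemma par_glb (A B X : T) : X <== A -> X <== B -> X <== A || B.
Proof.
  intros HA HB.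
  apply refines_trans with (X || X); [apply par_idem |].
  apply refines_trans with (A || X); [apply par_mono, HA | apply par_monor, HB].
Qed.

Lemma par_assoc_le (A B C : T) : (A || B) || C <== A || (B || C).
Proof.
  apply par_glb.
  - apply refines_trans with (A || B); apply par_lel.
  - apply par_glb; [| apply par_ler].
    apply refines_trans with (A || B); [apply par_lel | apply par_ler].
Qed.

Lemma par_assoc_ge (A B C : T) : A || (B || C) <== (A || B) || C.
Proof.
  apply par_glb.
  - apply par_glb; [apply par_lel |].
    apply refines_trans with (B || C); [apply par_ler | apply par_lel].
  - apply refines_trans with (B || C); apply par_ler.
Qed.

End ParMeet.

Theorem theorem6 (T : SpecTheory)
  (idem : forall A : T, refines T A (par T A A)) :
  forall A B C : T,
    refines T (par T (par T A B) C) (par T A (par T B C)) /\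
    refines T (par T A (par T B C)) (par T (par T A B) C).
Proof.
  intros A B C.
  split; [apply par_assoc_le | apply par_assoc_ge]; exact idem.
Qed.
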